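(* Let $B=B_{\mathbb{S}^3_\theta}$ carry the Riemannian structure induced from $\mathbb{R}^4_\theta$ as described in the context, and let $\widetilde f=\tfrac12\sum_{i,j}h_{ij}z^iz^j=\tfrac12(z^1z^3-z^2z^4)$ (a central element of $B$) and $C=B/(\widetilde f)$. Then the $1$-form $\widetilde\nu:=\mathrm{d}_B\widetilde f=\sum_{i,j=1}^4h_{ij}\,z^i\,\mathrm{d}z^j\in\Omega^1_B$ is central and satisfies $[g_B^{-1}(\widetilde\nu\otimes_B\widetilde\nu)]=1$ in $C$; hence $C$ is a noncommutative hypersurface of $B$ (with basis $[\widetilde\nu]$ of $N^1_C$). The projector $\widetilde\Pi:\widetilde q_!(\Omega^1_B)\to\widetilde q_!(\Omega^1_B)$, $[\omega]\mapsto[\omega-g_B^{-1}(\omega\otimes_B\widetilde\nu)\widetilde\nu]$, is given by $\widetilde\Pi(\mathrm{d}z^i)=\mathrm{d}z^i+(-1)^i\,z^i\,\widetilde\nu$.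
   Context: $\theta\in\mathbb{R}$; $R=(R^{ab})$ (row $a$, column $b$) with rows $(1,e^{-i\theta},1,e^{i\theta})$, $(e^{i\theta},1,e^{-i\theta},1)$, $(1,e^{i\theta},1,e^{-i\theta})$, $(e^{-i\theta},1,e^{i\theta},1)$; $A=\mathbb{C}\langle z^1,\dots,z^4\rangle/(z^iz^j-R^{ji}z^jz^i)$; $\Omega^1_A=\bigoplus_iA\,\mathrm{d}z^i$ free left module with $\mathrm{d}z^i\,z^j=R^{ji}z^j\mathrm{d}z^i$, $\mathrm{d}$ Leibniz extension of $z^i\mapsto\mathrm{d}z^i$. $P$ with rows $(0,0,1,0),(0,0,0,1),(1,0,0,0),(0,1,0,0)$, $(g_{ij})=\tfrac12P$, $(g^{ij})=2P$; $(h_{ij})=\tfrac12Q$ with $Q$ having rows $(0,0,1,0),(0,0,0,-1),(1,0,0,0),(0,-1,0,0)$. $B=A/(f)$ with $f=\tfrac12(z^1z^3+z^2z^4-1)$; $\Omega^1_B$ is the quotient of $\Omega^1_A/(f\Omega^1_A+\Omega^1_Af)$ by the $B$-subbimodule generated by $[\mathrm{d}f]$, with $\mathrm{d}_B[a]=[\mathrm{d}a]$ (classes are suppressed in notation). The induced Riemannian structure on $B$ is given by $g_B=\sum g_{ij}\mathrm{d}z^i\otimes_B\mathrm{d}z^j$, inverse metric $g_B^{-1}(\mathrm{d}z^i\otimes_B\mathrm{d}z^j)=g^{ij}-z^iz^j$ (extended as $B$-bimodule map), $\nabla_B(\mathrm{d}z^i)=-z^i\sum g_{kl}\mathrm{d}z^k\otimes_B\mathrm{d}z^l$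 (with left Leibniz rule), $\sigma_B(\mathrm{d}z^i\otimes_B\mathrm{d}z^j)=R^{ji}\mathrm{d}z^j\otimes_B\mathrm{d}z^i$. Hypersurface notions (for an algebra $B$ with calculus $\Omega^1_B$ and inverse metric $g_B^{-1}$): for $C=B/J$, $J$ a two-sided ideal, $\widetilde q:B\to C$, $\widetilde q_!(\Omega^1_B)=\Omega^1_B/(J\Omega^1_B+\Omega^1_BJ)$, $N^1_C$ the $C$-subbimodule generated by $[\mathrm{d}_Ba]$, $a\in J$, $\Omega^1_C=\widetilde q_!(\Omega^1_B)/N^1_C$. $C$ is a (metrically co-orientable) noncommutative hypersurface if $N^1_C$ is free of rank one with basis $[\widetilde\nu]$, $\widetilde\nu\in\Omega^1_B$ central, $[g_B^{-1}(\widetilde\nu\otimes_B\widetilde\nu)]=1\in C$. *)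

From HB Require Import structures.
From mathcomp Require Import all_boot all_algebra.
From mathcomp Require Import reals trigo.
From mathcomp.real_closed Require Import complex.
From mathcomp Require Import finmap.
From mathcomp.multinomials Require Import monalg.

Set Implicit Arguments.
Unset Strict Implicit.
Unset Printing Implicit Defensive.

Import GRing.Theory.
Local Open Scope ring_scope.

(* Conventions.  Indices 1..4 of the paper are the ordinals 0..3 of 'I_4.    *)
(* All algebras of the paper are quotients of the free algebra               *)
(*   F = C<z^1,..,z^4> = {malg C[{fmonom 'I_4}]},                            *)
(* and all bimodules (Omega^1_A, Omega^1_B, q_!(Omega^1_B), N^1_C) are       *)
(* quotients / subquotients of Om = 'rV[F]_4 (the free left F-module on      *)
(* dz^1..dz^4).  A quotient X/Z is represented by the ambient object X       *)
(* together with the predicate Z describing the kernel; equalities in the    *)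
(* quotient are stated as "difference of lifts lies in Z".                   *)

Section NCSphere.
Variable R : realType.
Variable theta : R.

Definition CC := R[i].
Definition Fr := {malg CC[{fmonom 'I_4}]}.
Definition Om := 'rV[Fr]_4.

Definition cexpi (x : R) : CC := (cos x +i* sin x)%C.

(* the matrix R = (R^{ab}), row a, column b *)
Definition Rc (a b : 'I_4) : CC :=
  let e := cexpi theta in let e' := cexpi (- theta) in
  match nat_of_ord a, nat_of_ord b with
  | 0, 0 => 1 | 0, 1 => e' | 0, 2 => 1 | 0, _ => e
  | 1, 0 => e | 1, 1 => 1 | 1, 2 => e' | 1, _ => 1
  | 2, 0 => 1 | 2, 1 => e | 2, 2 => 1 | 2, _ => e'
  | _, 0 => e' | _, 1 => 1 | _, 2 => e | _, _ => 1
  end.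

Definition z (i : 'I_4) : Fr := << fmu i >>.
Definition zw (s : seq 'I_4) : Fr := \prod_(j <- s) z j.

Definition dz (i : 'I_4) : Om := delta_mx 0 i.

(* dz^i z^j = R^{ji} z^j dz^i : twisting character and automorphism *)
Definition chi (i : 'I_4) (s : seq 'I_4) : CC := \prod_(j <- s) Rc j i.
Definition tw (i : 'I_4) (b : Fr) : Fr :=
  \sum_(w <- msupp b) (b@_w * chi i w) *: (<< w >> : Fr).

(* right action of Fr on Om (left action is the scaling *:) *)
Definition ract (v : Om) (b : Fr) : Om := \row_j (v 0 j * tw j b).

(* the differential d : Fr -> Om, Leibniz extension of z^i |-> dz^i *)
Definition dword (s : seq 'I_4) : Om :=
  \sum_(k < size s)
     (zw (take k s) *: ract (dz (nth ord0 s k)) (zw (drop k.+1 s))).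
Definition dd (b : Fr) : Om := \sum_(w <- msupp b) (b@_w)%:MP *: dword w.

Inductive ideal_gen (S : Fr -> Prop) : Fr -> Prop :=
| ig_gen u s v : S s -> ideal_gen S (u * s * v)
| ig_0 : ideal_gen S 0
| ig_add x y : ideal_gen S x -> ideal_gen S y -> ideal_gen S (x + y).

Inductive bimod_gen (S : Om -> Prop) : Om -> Prop :=
| bg_gen a s b : S s -> bimod_gen S (ract (a *: s) b)
| bg_0 : bimod_gen S 0
| bg_add x y : bimod_gen S x -> bimod_gen S y -> bimod_gen S (x + y).

Definition relA (x : Fr) : Prop :=
  exists i j : 'I_4, x = z i * z j - (Rc j i)%:MP * (z j * z i).
Definition IA : Fr -> Prop := ideal_gen relA.

Definition halfF : Fr := ((2 : CC)^-1)%:MP.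

Definition fA : Fr := halfF * (z 0 * z 2 + z 1 * z 3 - 1).

(* B = A/(f) = Fr / IB *)
Definition IB : Fr -> Prop := ideal_gen (fun x => relA x \/ x = fA).

(* Omega^1_A = Om / ZA *)
Definition ZA (v : Om) : Prop := forall i, IA (v 0 i).

(* Omega^1_B = Om / ZB :  Omega^1_A / (f Omega^1_A + Omega^1_A f + <<[df]>>) *)
Definition ZB : Om -> Prop :=
  bimod_gen (fun v => ZA v \/ (exists w, v = fA *: w)
                      \/ (exists w, v = ract w fA) \/ v = dd fA).

Definition gup (i j : 'I_4) : Fr :=
  if nat_of_ord j == ((nat_of_ord i + 2) %% 4)%N then 2%:R else 0.
Definition hlow (i j : 'I_4) : Fr :=
  if nat_of_ord j == ((nat_of_ord i + 2) %% 4)%N then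
    (if odd i then - halfF else halfF) else 0.

(* g_B^{-1}(omega (x)_B eta), the B-bimodule extension of
   dz^i (x) dz^j |-> g^{ij} - z^i z^j, evaluated on lifts:
   g^{-1}(a dz^i (x) b dz^j) = a tw_i(b) (g^{ij} - z^i z^j)            *)
Definition ginvB (om eta : Om) : Fr :=
  \sum_(i < 4) \sum_(j < 4) om 0 i * tw i (eta 0 j) * (gup i j - z i * z j).

(* Hypersurface notions for a quotient C = B/J, J two-sided ideal of B.     *)
(* IC is the preimage of J in Fr (so C = Fr / IC).                         *)

(* q_!(Omega^1_B) = Omega^1_B / (J Omega^1_B + Omega^1_B J) = Om / ZQ IC *)
Definition ZQ (IC : Fr -> Prop) : Om -> Prop :=
  bimod_gen (fun v => ZB v \/
     exists a w, IC a /\ (v = a *: w \/ v = ract w a)).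

(* lift of N^1_C : the C-subbimodule generated by the [d_B a], a in J
   (N^1_C = NCl IC / ZQ IC) *)
Definition NCl (IC : Fr -> Prop) : Om -> Prop :=
  bimod_gen (fun v => ZQ IC v \/ exists a, IC a /\ v = dd a).

(* C is a metrically co-orientable noncommutative hypersurface with
   normal nu : N^1_C is free of rank one (as a left C-module) with basis
   [nu], nu is central in Omega^1_B and [g_B^{-1}(nu (x) nu)] = 1 in C. *)
Definition nc_hypersurface (IC : Fr -> Prop) (nu : Om) : Prop :=
  [/\ forall b : Fr, ZB (b *: nu - ract nu b),
      IC (ginvB nu nu - 1),
      NCl IC nu,
      forall v, NCl IC v -> exists c : Fr, ZQ IC (v - c *: nu)
    & forall c : Fr, ZQ IC (c *: nu) -> IC c].

Definition ftil : Fr := \sum_(i < 4) \sum_(j < 4) halfF * hlow i j * z i * z j.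
Definition IC13 : Fr -> Prop :=
  ideal_gen (fun x => relA x \/ x = fA \/ x = ftil).
Definition nutil : Om := dd ftil.

Definition Pitil (om : Om) : Om := om - ginvB om nutil *: nutil.

End NCSphere.

From Pilot Require Import Defs.
From mathcomp Require Import all_boot all_algebra.
From mathcomp Require Import reals trigo.
From mathcomp.real_closed Require Import complex.
From mathcomp Require Import finmap.
From mathcomp.multinomials Require Import monalg.
From mathcomp Require Import ring.
Import GRing.Theory.
Local Open Scope ring_scope.

(* Modulo the relations of A, z^k b = tw_k(b) z^k, where tw_k rescales a
   word w by chi_k(w); since R^{li} R^{l,i+2} = 1 the twists of z^i and
   z^{i+2} are mutually inverse, so the four products z^i z^{i+2} -- hence f
   and f~ -- are central, and so is nu~ = d f~ = sum h_{ik} z^i dz^k.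
   Everything else is controlled by the functional
   phi(omega) = sum_i omega_i (-1)^i z^i on lifts of 1-forms: it is right
   linear modulo A, it maps the kernel of q_!(Omega^1_B) into the ideal of C,
   and phi(nu~) = 1 + 2 f modulo A.  Thus c nu~ = 0 in q_!(Omega^1_B) forces
   c = 0 in C, and g_B^{-1}(omega (x) nu~) = phi(omega) in C, which yields
   both the normalisation g_B^{-1}(nu~ (x) nu~) = 1 and the formula for Pi~.
   Finally the Leibniz rule and the centrality of nu~ show that d_B maps the
   ideal (f~) into C nu~, so [nu~] spans N^1_C. *)

Section Twist.
Variables (R : realType) (theta : R).
Local Notation Rc := (Rc theta).
Local Notation chi := (chi theta).

Lemma cexpi_mulN (t : R) : cexpi t * cexpi (- t) = 1.
Proof.
rewrite /cexpi cosN sinN.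
change ((cos t * cos t - sin t * (- sin t))
          +i* (cos t * (- sin t) + sin t * cos t) = (1 +i* 0))%C.
congr (_ +i* _)%C; last by ring.
by rewrite mulrN opprK -!expr2 cos2Dsin2.
Qed.

Lemma cexpiN_mul (t : R) : cexpi (- t) * cexpi t = 1.
Proof. by rewrite mulrC cexpi_mulN. Qed.

Lemma Rc_inv (i j : 'I_4) : Rc i j * Rc j i = 1.
Proof.
by case: i => [[|[|[|[|i]]]] Hi] //; case: j => [[|[|[|[|j]]]] Hj] //;
  rewrite /Rc /= ?mul1r ?mulr1 ?cexpi_mulN ?cexpiN_mul.
Qed.

Lemma Rc_antipodal (i k l : 'I_4) : nat_of_ord k = ((i + 2) %% 4)%N ->
  Rc l i * Rc l k = 1.
Proof.
by case: i => [[|[|[|[|i]]]] Hi] //; case: k => [[|[|[|[|k]]]] Hk] //= _;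
  case: l => [[|[|[|[|l]]]] Hl] //;
  rewrite /Rc /= ?mul1r ?mulr1 ?cexpi_mulN ?cexpiN_mul.
Qed.

Lemma chi_nil i : chi i [::] = 1. Proof. by rewrite /Defs.chi big_nil. Qed.

Lemma chi_cons i j s : chi i (j :: s) = Rc j i * chi i s.
Proof. by rewrite /Defs.chi big_cons. Qed.

Lemma chi_cat i s t : chi i (s ++ t) = chi i s * chi i t.
Proof. by rewrite /Defs.chi big_cat. Qed.

Lemma chi_antipodal (i k : 'I_4) s : nat_of_ord k = ((i + 2) %% 4)%N ->
  chi i s * chi k s = 1.
Proof.
move=> ik; elim: s => [|l s IHs]; first by rewrite !chi_nil mulr1.
by rewrite !chi_cons mulrACA IHs (@Rc_antipodal i k l ik) mulr1.
Qed.

End Twist.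

Lemma sum_ord4 (V : zmodType) (F : 'I_4 -> V) :
  \sum_(i < 4) F i = F 0 + F 1 + F 2 + F 3.
Proof.
rewrite !big_ord_recl big_ord0 addr0 !addrA.
have E1 : lift ord0 (ord0 : 'I_3) = 1 by apply: val_inj.
have E2 : lift ord0 (lift ord0 (ord0 : 'I_2)) = 2 by apply: val_inj.
have E3 : lift ord0 (lift ord0 (lift ord0 (ord0 : 'I_1))) = 3 by apply: val_inj.
by rewrite E1 E2 E3.
Qed.

Lemma ord4_ind (P : 'I_4 -> Prop) : P 0 -> P 1 -> P 2 -> P 3 -> forall i, P i.
Proof.
move=> P0 P1 P2 P3; case=> [[|[|[|[|i]]]] Hi] //.
- by rewrite (_ : Ordinal Hi = 0) //; apply: val_inj.
- by rewrite (_ : Ordinal Hi = 1) //; apply: val_inj.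
- by rewrite (_ : Ordinal Hi = 2) //; apply: val_inj.
- by rewrite (_ : Ordinal Hi = 3) //; apply: val_inj.
Qed.

(* The argument is carried out in an abstract algebra T spanned by words in
   four generators, with a twist and a differential given on words.  The free
   algebra Fr is an instance (and every definition below is convertible to its
   counterpart in Defs for that instance); working with an opaque T keeps
   unification cheap. *)
Section TwistedAlgebra.
Variables (R : realType) (theta : R).
Local Notation CC := (CC R).
Local Notation Rc := (Rc theta).
Local Notation chi := (chi theta).

Variable T : lalgType CC.
Hypothesis scalerAr : forall c (x y : T), x * (c *: y) = c *: (x * y).
Variable cst : CC -> T.
Hypothesis cstE : forall c, cst c = c%:A.

Variable zT : 'I_4 -> T.
Definition zwT (s : seq 'I_4) : T := \prod_(j <- s) zT j.
Hypothesis word_ind : forall P : T -> Prop, P 0 ->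
  (forall x y, P x -> P y -> P (x + y)) -> (forall c s, P (c *: zwT s)) ->
  forall x, P x.

Variable twT : 'I_4 -> T -> T.
Hypothesis twTD : forall i, {morph twT i : x y / x + y}.
Hypothesis twT_word : forall i c s, twT i (c *: zwT s) = (c * chi i s) *: zwT s.

Definition ractT (v : 'rV[T]_4) (b : T) : 'rV[T]_4 := \row_j (v 0 j * twT j b).
Definition dzT (i : 'I_4) : 'rV[T]_4 := delta_mx 0 i.
Definition dwordT (s : seq 'I_4) : 'rV[T]_4 :=
  \sum_(k < size s)
     (zwT (take k s) *: ractT (dzT (nth ord0 s k)) (zwT (drop k.+1 s))).

Variable dT : T -> 'rV[T]_4.
Hypothesis dTD : {morph dT : x y / x + y}.
Hypothesis dT_word : forall c s, dT (c *: zwT s) = cst c *: dwordT s.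

Lemma mul_cst c x : cst c * x = c *: x.
Proof. by rewrite cstE mulr_algl. Qed.

Lemma mulr_cst c x : x * cst c = c *: x.
Proof. by rewrite cstE scalerAr mulr1. Qed.

Lemma cst_comm c x : cst c * x = x * cst c.
Proof. by rewrite mul_cst mulr_cst. Qed.

Lemma cstM c d : cst (c * d) = cst c * cst d.
Proof. by rewrite mul_cst !cstE scalerA. Qed.

Lemma cst0 : cst 0 = 0. Proof. by rewrite cstE scale0r. Qed.

Lemma cst1 : cst 1 = 1. Proof. by rewrite cstE scale1r. Qed.

Lemma zwT_nil : zwT [::] = 1. Proof. by rewrite /zwT big_nil. Qed.

Lemma zwT_cons j s : zwT (j :: s) = zT j * zwT s.
Proof. by rewrite /zwT big_cons. Qed.

Lemma zwT_cat s t : zwT (s ++ t) = zwT s * zwT t.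
Proof. by rewrite /zwT big_cat. Qed.

Lemma zwT1 j : zwT [:: j] = zT j. Proof. by rewrite zwT_cons zwT_nil mulr1. Qed.

Lemma mul_scale_zwT a b s t :
  (a *: zwT s) * (b *: zwT t) = (a * b) *: zwT (s ++ t).
Proof. by rewrite -scalerAl scalerAr scalerA zwT_cat. Qed.

Section Twisting.
Variable i : 'I_4.

Lemma twT0 : twT i 0 = 0.
Proof. by apply: (addrI (twT i 0)); rewrite -twTD !addr0. Qed.

Lemma twTZ c x : twT i (c *: x) = c *: twT i x.
Proof.
elim/word_ind: x => [|x y Hx Hy|d s]; first by rewrite scaler0 twT0 scaler0.
  by rewrite scalerDr !twTD Hx Hy scalerDr.
by rewrite scalerA !twT_word scalerA mulrA.
Qed.

Lemma twTM x y : twT i (x * y) = twT i x * twT i y.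
Proof.
elim/word_ind: x => [|x1 x2 H1 H2|c s]; first by rewrite mul0r twT0 mul0r.
  by rewrite mulrDl !twTD H1 H2 mulrDl.
elim/word_ind: y => [|y1 y2 H1 H2|d t]; first by rewrite mulr0 twT0 mulr0.
  by rewrite mulrDr !twTD H1 H2 mulrDr.
by rewrite mul_scale_zwT !twT_word mul_scale_zwT chi_cat; congr (_ *: _); ring.
Qed.

Lemma twT1 : twT i 1 = 1.
Proof. by rewrite -zwT_nil -[zwT _]scale1r twT_word chi_nil mulr1. Qed.

Lemma twT_z j : twT i (zT j) = Rc j i *: zT j.
Proof.
by rewrite -{1}zwT1 -{1}[zwT _]scale1r twT_word chi_cons chi_nil mul1r mulr1 zwT1.
Qed.

End Twisting.

Lemma twT_antipodal (i k : 'I_4) b : nat_of_ord k = ((i + 2) %% 4)%N ->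
  twT k (twT i b) = b.
Proof.
move=> ik; elim/word_ind: b => [|x y Hx Hy|c s]; first by rewrite !twT0.
  by rewrite !twTD Hx Hy.
by rewrite !twT_word -mulrA chi_antipodal // mulr1.
Qed.

Lemma ractTDl v w b : ractT (v + w) b = ractT v b + ractT w b.
Proof. by apply/rowP => j; rewrite !mxE mulrDl. Qed.

Lemma ractTDr v b b' : ractT v (b + b') = ractT v b + ractT v b'.
Proof. by apply/rowP => j; rewrite !mxE twTD mulrDr. Qed.

Lemma ractTZl (a : T) v b : ractT (a *: v) b = a *: ractT v b.
Proof. by apply/rowP => j; rewrite !mxE mulrA. Qed.

Lemma ractTZr c v b : ractT v (c *: b) = cst c *: ractT v b.
Proof. by apply/rowP => j; rewrite !mxE twTZ scalerAr mul_cst. Qed.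

Lemma ractTA v a b : ractT (ractT v a) b = ractT v (a * b).
Proof. by apply/rowP => j; rewrite !mxE twTM mulrA. Qed.

Lemma ractT1 v : ractT v 1 = v.
Proof. by apply/rowP => j; rewrite !mxE twT1 mulr1. Qed.

Lemma ractT0l b : ractT 0 b = 0.
Proof. by apply/rowP => j; rewrite !mxE mul0r. Qed.

Lemma ractT0r v : ractT v 0 = 0.
Proof. by apply/rowP => j; rewrite !mxE twT0 mulr0. Qed.

Lemma ractTBl v w b : ractT (v - w) b = ractT v b - ractT w b.
Proof. by apply/rowP => j; rewrite !mxE mulrBl. Qed.

Lemma ractT_dz i b : ractT (dzT i) b = twT i b *: dzT i.
Proof.
apply/rowP => j; rewrite !mxE eqxx andTb.
by case: (eqVneq i j) => [<-|_]; rewrite ?mul1r ?mulr1 ?mul0r ?mulr0.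
Qed.

Lemma dzT_coord i k : dzT i 0 k = (i == k)%:R.
Proof. by rewrite /dzT mxE eqxx andTb eq_sym. Qed.

Inductive ideal_genT (S : T -> Prop) : T -> Prop :=
| igT_gen u s v : S s -> ideal_genT S (u * s * v)
| igT_0 : ideal_genT S 0
| igT_add x y : ideal_genT S x -> ideal_genT S y -> ideal_genT S (x + y).

Inductive bimod_genT (S : 'rV[T]_4 -> Prop) : 'rV[T]_4 -> Prop :=
| bgT_gen a s b : S s -> bimod_genT S (ractT (a *: s) b)
| bgT_0 : bimod_genT S 0
| bgT_add x y : bimod_genT S x -> bimod_genT S y -> bimod_genT S (x + y).

Arguments igT_gen {S} u {s} v. Arguments igT_0 {S}. Arguments igT_add {S}.
Arguments bgT_gen {S} a {s} b. Arguments bgT_0 {S}. Arguments bgT_add {S}.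

Section IdealGen.
Context {S : T -> Prop}.
Local Notation I := (ideal_genT S).

Lemma igT_mem s : S s -> I s.
Proof. by move=> Ss; have := igT_gen 1 1 Ss; rewrite mul1r mulr1. Qed.

Lemma igT_mull u x : I x -> I (u * x).
Proof.
elim=> [u' s v Ss||x1 x2 _ H1 _ H2]; last by rewrite mulrDr; apply: igT_add.
  by rewrite !mulrA; apply: igT_gen.
by rewrite mulr0; apply: igT_0.
Qed.

Lemma igT_mulr v x : I x -> I (x * v).
Proof.
elim=> [u s v' Ss||x1 x2 _ H1 _ H2]; last by rewrite mulrDl; apply: igT_add.
  by rewrite -mulrA; apply: igT_gen.
by rewrite mul0r; apply: igT_0.
Qed.

Lemma igT_opp x : I x -> I (- x).
Proof. by move=> Ix; rewrite -mulN1r; apply: igT_mull. Qed.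

Lemma igT_sub x y : I x -> I y -> I (x - y).
Proof. by move=> Ix Iy; apply: igT_add => //; apply: igT_opp. Qed.

Lemma igT_scale c x : I x -> I (c *: x).
Proof. by move=> Ix; rewrite -mul_cst; apply: igT_mull. Qed.

Lemma igT_sum (J : Type) (r : seq J) (P : pred J) (F : J -> T) :
  (forall j, P j -> I (F j)) -> I (\sum_(j <- r | P j) F j).
Proof. by move=> IF; apply: big_ind => //; [apply: igT_0 | apply: igT_add]. Qed.

Lemma igT_subK {x y} : I (x - y) -> I y -> I x.
Proof. by move=> Ixy Iy; rewrite -(subrK y x); apply: igT_add. Qed.

End IdealGen.

Lemma ideal_genT_mono (S S' : T -> Prop) : (forall x, S x -> S' x) ->
  forall x, ideal_genT S x -> ideal_genT S' x.
Proof.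
move=> SS' x; elim=> [u s v Ss||x1 x2 _ H1 _ H2]; last exact: igT_add.
  by apply: igT_gen; apply: SS'.
exact: igT_0.
Qed.

Section BimodGen.
Context {S : 'rV[T]_4 -> Prop}.
Local Notation M := (bimod_genT S).

Lemma bgT_mem s : S s -> M s.
Proof. by move=> Ss; have := bgT_gen 1 1 Ss; rewrite scale1r ractT1. Qed.

Lemma bgT_act a b x : M x -> M (ractT (a *: x) b).
Proof.
elim=> [a' s b' Ss||x1 x2 _ H1 _ H2].
- have -> : ractT (a *: ractT (a' *: s) b') b = ractT ((a * a') *: s) (b' * b).
    by rewrite ractTZl ractTA !ractTZl scalerA.
  exact: bgT_gen.
- by rewrite scaler0 ractT0l; apply: bgT_0.
by rewrite scalerDr ractTDl; apply: bgT_add.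
Qed.

Lemma bgT_scale a x : M x -> M (a *: x).
Proof. by move=> /(bgT_act a 1); rewrite ractT1. Qed.

Lemma bgT_opp x : M x -> M (- x).
Proof. by move=> Mx; rewrite -scaleN1r; apply: bgT_scale. Qed.

End BimodGen.

Lemma dwordT_nil : dwordT [::] = 0. Proof. by rewrite /dwordT big_ord0. Qed.

Lemma dwordT_cons j s :
  dwordT (j :: s) = ractT (dzT j) (zwT s) + zT j *: dwordT s.
Proof.
rewrite /dwordT /= big_ord_recl /= zwT_nil scale1r drop0; congr (_ + _).
rewrite scaler_sumr; apply: eq_bigr => k _.
by rewrite /= /bump leq0n add1n !add0n zwT_cons scalerA.
Qed.

Lemma dwordT_cat s t :
  dwordT (s ++ t) = ractT (dwordT s) (zwT t) + zwT s *: dwordT t.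
Proof.
elim: s => [|j s IHs]; first by rewrite dwordT_nil ractT0l add0r zwT_nil scale1r.
rewrite cat_cons !dwordT_cons IHs zwT_cat ractTDl ractTA ractTZl scalerDr addrA.
by rewrite zwT_cons scalerA.
Qed.

Lemma dT0 : dT 0 = 0.
Proof. by apply: (addrI (dT 0)); rewrite -dTD !addr0. Qed.

Lemma dTN x : dT (- x) = - dT x.
Proof. by apply/eqP; rewrite -addr_eq0 -dTD addNr dT0. Qed.

Lemma dTB x y : dT (x - y) = dT x - dT y.
Proof. by rewrite dTD dTN. Qed.

Lemma dTM x y : dT (x * y) = ractT (dT x) y + x *: dT y.
Proof.
elim/word_ind: x y => [|x1 x2 H1 H2|c s] y.
- by rewrite mul0r dT0 ractT0l scale0r addr0.
- by rewrite mulrDl !dTD H1 H2 ractTDl scalerDl addrACA.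
elim/word_ind: y => [|y1 y2 H1 H2|d t].
- by rewrite mulr0 dT0 ractT0r scaler0 addr0.
- by rewrite mulrDr !dTD H1 H2 ractTDr scalerDr addrACA.
rewrite mul_scale_zwT !dT_word dwordT_cat ractTZr ractTZl scalerDr !scalerA.
congr (_ + _); first by rewrite cstM cst_comm.
by rewrite -mul_cst -mulrA -cst_comm mulrA cstM.
Qed.

Lemma dT_z i : dT (zT i) = dzT i.
Proof.
rewrite -zwT1 -[zwT _]scale1r dT_word cst1 scale1r dwordT_cons dwordT_nil.
by rewrite scaler0 addr0 zwT_nil ractT1.
Qed.

Lemma dT_cst c : dT (cst c) = 0.
Proof. by rewrite cstE -zwT_nil dT_word dwordT_nil scaler0. Qed.

Lemma dT_mul_cst x c : dT (cst c * x) = cst c *: dT x.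
Proof. by rewrite dTM dT_cst ractT0l add0r. Qed.

Lemma dTZ x c : dT (c *: x) = cst c *: dT x.
Proof. by rewrite -mul_cst dT_mul_cst. Qed.

Lemma dT1 : dT 1 = 0.
Proof. by rewrite -cst1 dT_cst. Qed.

Lemma dT_zz i j : dT (zT i * zT j) = (Rc j i *: zT j) *: dzT i + zT i *: dzT j.
Proof. by rewrite dTM !dT_z ractT_dz twT_z. Qed.

Definition relAT (x : T) : Prop :=
  exists i j : 'I_4, x = zT i * zT j - cst (Rc j i) * (zT j * zT i).
Definition IAT : T -> Prop := ideal_genT relAT.
Definition halfT : T := cst ((2 : CC)^-1).
Definition fAT : T := halfT * (zT 0 * zT 2 + zT 1 * zT 3 - 1).
Definition IBT : T -> Prop := ideal_genT (fun x => relAT x \/ x = fAT).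
Definition ZAT (v : 'rV[T]_4) : Prop := forall i, IAT (v 0 i).
Definition ZBT : 'rV[T]_4 -> Prop :=
  bimod_genT (fun v => ZAT v \/ (exists w, v = fAT *: w)
                      \/ (exists w, v = ractT w fAT) \/ v = dT fAT).
Definition gupT (i j : 'I_4) : T :=
  if nat_of_ord j == ((nat_of_ord i + 2) %% 4)%N then 2%:R else 0.
Definition hlowT (i j : 'I_4) : T :=
  if nat_of_ord j == ((nat_of_ord i + 2) %% 4)%N then
    (if odd i then - halfT else halfT) else 0.
Definition ginvBT (om eta : 'rV[T]_4) : T :=
  \sum_(i < 4) \sum_(j < 4) om 0 i * twT i (eta 0 j) * (gupT i j - zT i * zT j).
Definition ZQT (IC : T -> Prop) : 'rV[T]_4 -> Prop :=
  bimod_genT (fun v => ZBT v \/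
     exists a w, IC a /\ (v = a *: w \/ v = ractT w a)).
Definition NClT (IC : T -> Prop) : 'rV[T]_4 -> Prop :=
  bimod_genT (fun v => ZQT IC v \/ exists a, IC a /\ v = dT a).
Definition nc_hypersurfaceT (IC : T -> Prop) (nu : 'rV[T]_4) : Prop :=
  [/\ forall b : T, ZBT (b *: nu - ractT nu b),
      IC (ginvBT nu nu - 1),
      NClT IC nu,
      forall v, NClT IC v -> exists c : T, ZQT IC (v - c *: nu)
    & forall c : T, ZQT IC (c *: nu) -> IC c].
Definition ftilT : T :=
  \sum_(i < 4) \sum_(j < 4) halfT * hlowT i j * zT i * zT j.
Definition IC13T : T -> Prop :=
  ideal_genT (fun x => relAT x \/ x = fAT \/ x = ftilT).
Definition nutilT : 'rV[T]_4 := dT ftilT.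
Definition PitilT (om : 'rV[T]_4) : 'rV[T]_4 := om - ginvBT om nutilT *: nutilT.

Local Notation ZQC := (ZQT IC13T).

Lemma IAT_IBT {x} : IAT x -> IBT x.
Proof. by apply: ideal_genT_mono => y Ay; left. Qed.

Lemma IAT_IC13T {x} : IAT x -> IC13T x.
Proof. by apply: ideal_genT_mono => y Ay; left. Qed.

Lemma IC13T_fAT : IC13T fAT.
Proof. by apply: igT_mem; right; left. Qed.

Lemma IC13T_ftilT : IC13T ftilT.
Proof. by apply: igT_mem; right; right. Qed.

Lemma IAT_rel i j : IAT (zT i * zT j - cst (Rc j i) * (zT j * zT i)).
Proof. by apply: igT_mem; exists i, j. Qed.

Lemma dT_rel i j : dT (zT i * zT j - cst (Rc j i) * (zT j * zT i)) = 0.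
Proof.
rewrite dTB dT_mul_cst !dT_zz !scalerDr !scalerA mul_cst scalerA Rc_inv scale1r.
by rewrite mul_cst [X in _ - X]addrC subrr.
Qed.

Lemma IAT_comm_word k s : IAT (zT k * zwT s - chi k s *: (zwT s * zT k)).
Proof.
elim: s => [|j s IHs].
  by rewrite zwT_nil chi_nil scale1r mulr1 mul1r subrr; apply: igT_0.
have -> : zT k * zwT (j :: s) - chi k (j :: s) *: (zwT (j :: s) * zT k)
   = (zT k * zT j - cst (Rc j k) * (zT j * zT k)) * zwT s
     + Rc j k *: (zT j * (zT k * zwT s - chi k s *: (zwT s * zT k))).
  rewrite zwT_cons chi_cons mulrBl mulrBr scalerAr scalerBr scalerA mul_cst.
  by rewrite -scalerAl !mulrA addrA subrK.
apply: igT_add; first by apply: igT_mulr; apply: IAT_rel.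
by apply: igT_scale; apply: igT_mull.
Qed.

Lemma IAT_comm k b : IAT (zT k * b - twT k b * zT k).
Proof.
elim/word_ind: b => [|x y Hx Hy|c s].
- by rewrite mulr0 twT0 mul0r subrr; apply: igT_0.
- by rewrite mulrDr twTD mulrDl opprD addrACA; apply: igT_add.
rewrite twT_word scalerAr -scalerA -!scalerAl -scalerBr.
by apply: igT_scale; apply: IAT_comm_word.
Qed.

Lemma IAT_comm_twT k b : IAT (twT k b * zT k - zT k * b).
Proof. by rewrite -opprB; apply: igT_opp; apply: IAT_comm. Qed.

Lemma IAT_antipodal_central (i k : 'I_4) b : nat_of_ord k = ((i + 2) %% 4)%N ->
  IAT (b * (zT i * zT k) - zT i * zT k * b).
Proof.
move=> ik.
have ki : nat_of_ord i = ((k + 2) %% 4)%N.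
  by rewrite ik; case: i {ik} => [[|[|[|[|i]]]] Hi].
have -> : b * (zT i * zT k) - zT i * zT k * b =
   - (zT i * (zT k * b - twT k b * zT k))
   - (zT i * twT k b - twT i (twT k b) * zT i) * zT k.
  rewrite (@twT_antipodal k i b ki) mulrBr mulrBl !mulrA !opprB.
  by rewrite [in RHS]addrC [in RHS]addrA subrK.
apply: igT_sub; first by apply: igT_opp; apply: igT_mull; apply: IAT_comm.
by apply: igT_mulr; apply: IAT_comm.
Qed.

(* Every element met below lies in the span of the four antipodal products
   and 1; there identities reduce to comparing coefficients in CC. *)
Definition z02 : T := zT 0 * zT 2.
Definition z13 : T := zT 1 * zT 3.
Definition z20 : T := zT 2 * zT 0.
Definition z31 : T := zT 3 * zT 1.
Definition quad (a b c d e : CC) : T :=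
  a *: z02 + b *: z13 + c *: z20 + d *: z31 + e *: 1.

Lemma quadD a b c d e a' b' c' d' e' :
  quad a b c d e + quad a' b' c' d' e'
  = quad (a + a') (b + b') (c + c') (d + d') (e + e').
Proof.
rewrite /quad !scalerDl addrACA; congr (_ + _); rewrite addrACA; congr (_ + _).
by rewrite addrACA; congr (_ + _); rewrite addrACA.
Qed.

Lemma quadZ k a b c d e :
  k *: quad a b c d e = quad (k * a) (k * b) (k * c) (k * d) (k * e).
Proof. by rewrite /quad !scalerDr !scalerA. Qed.

Lemma quadN a b c d e : - quad a b c d e = quad (- a) (- b) (- c) (- d) (- e).
Proof. by rewrite -scaleN1r quadZ !mulN1r. Qed.

Lemma quadB a b c d e a' b' c' d' e' :
  quad a b c d e - quad a' b' c' d' e'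
  = quad (a - a') (b - b') (c - c') (d - d') (e - e').
Proof. by rewrite quadN quadD. Qed.

Lemma z02_quad x : x *: z02 = quad x 0 0 0 0.
Proof. by rewrite /quad !scale0r !addr0. Qed.

Lemma z13_quad x : x *: z13 = quad 0 x 0 0 0.
Proof. by rewrite /quad !scale0r !addr0 add0r. Qed.

Lemma z20_quad x : x *: z20 = quad 0 0 x 0 0.
Proof. by rewrite /quad !scale0r !addr0 !add0r. Qed.

Lemma z31_quad x : x *: z31 = quad 0 0 0 x 0.
Proof. by rewrite /quad !scale0r !addr0 !add0r. Qed.

Lemma IAT_quad (a b c d : CC) : a + c = 0 -> b + d = 0 -> IAT (quad a b c d 0).
Proof.
move=> /eqP; rewrite addr_eq0 => /eqP -> /eqP; rewrite addr_eq0 => /eqP ->.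
have -> : quad (- c) (- d) c d 0 = c *: (z20 - z02) + d *: (z31 - z13).
  by rewrite /quad scale0r addr0 !scalerBr !scaleNr -addrA addrC addrACA.
by apply: igT_add; apply: igT_scale; rewrite -[X in _ - X]mul1r -cst1;
  apply: IAT_rel.
Qed.

Lemma quad_central b a1 a2 a3 a4 a5 :
  IAT (b * quad a1 a2 a3 a4 a5 - quad a1 a2 a3 a4 a5 * b).
Proof.
have commD x y : b * (x + y) - (x + y) * b = (b * x - x * b) + (b * y - y * b).
  by rewrite mulrDr mulrDl opprD addrACA.
have commZ k x : b * (k *: x) - (k *: x) * b = k *: (b * x - x * b).
  by rewrite scalerAr -scalerAl scalerBr.
rewrite /quad !commD !commZ mulr1 mul1r subrr scaler0 addr0.
by do 3?apply: igT_add; apply: igT_scale; apply: IAT_antipodal_central.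
Qed.

Local Notation h := ((2 : CC)^-1).
Local Notation q := ((2 : CC)^-1 * (2 : CC)^-1).

Lemma ftilT_quad : ftilT = quad q (- q) q (- q) 0.
Proof.
rewrite /ftilT !sum_ord4 /hlowT /= !mulr0 !mul0r !add0r !addr0.
rewrite !mulrN !mulNr -!mulrA /halfT !mul_cst !scalerA /quad scale0r addr0.
by rewrite !scaleNr.
Qed.

Lemma fAT_quad : fAT = quad h h 0 0 (- h).
Proof.
by rewrite /fAT /halfT mul_cst !scalerDr scalerN /quad !scale0r !addr0 scaleNr.
Qed.

Lemma ftilT_IAT : IAT (ftilT - halfT * (zT 0 * zT 2 - zT 1 * zT 3)).
Proof.
have -> : halfT * (zT 0 * zT 2 - zT 1 * zT 3) = quad h (- h) 0 0 0.
  by rewrite /halfT mul_cst scalerBr /quad !scale0r !addr0 scaleNr.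
by rewrite ftilT_quad quadB subrr; apply: IAT_quad; rewrite ?subr0 ?opprK; field.
Qed.

Lemma ftilT_central b : IBT (b * ftilT - ftilT * b).
Proof. by apply: IAT_IBT; rewrite ftilT_quad; apply: quad_central. Qed.

Lemma dT_quad a b c d e : dT (quad a b c d e) =
  cst a *: dT z02 + cst b *: dT z13 + cst c *: dT z20 + cst d *: dT z31.
Proof. by rewrite /quad !dTD !dTZ dT1 scaler0 addr0. Qed.

Lemma nutilT_coord k : nutilT 0 k = \sum_(i < 4) hlowT i k * zT i.
Proof.
rewrite /nutilT ftilT_quad dT_quad /z02 /z13 /z20 /z31 !dT_zz sum_ord4 /hlowT.
rewrite !mxE.
have [-> -> -> ->] : [/\ Rc 2 0 = 1, Rc 3 1 = 1, Rc 0 2 = 1 & Rc 1 3 = 1] by [].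
case: k => [[|[|[|[|k]]]] Hk] //=;
 rewrite ?scale1r ?mulr0 ?mulr1 ?addr0 ?add0r ?mul0r ?addr0 ?add0r ?mulNr /halfT
   ?mul_cst -?scaleNr ?scaler0 ?addr0 ?add0r -scalerDl; congr (_ *: _); by field.
Qed.

Lemma nutilTE :
  nutilT = \sum_(i < 4) \sum_(j < 4) (hlowT i j * zT i) *: dzT j.
Proof.
apply/rowP => k; rewrite nutilT_coord summxE; apply: eq_bigr => i _.
rewrite summxE (bigD1 k) //= mxE dzT_coord eqxx mulr1 big1 ?addr0 // => j ne.
by rewrite mxE dzT_coord (negbTE ne) mulr0.
Qed.

Lemma nutilT0 : nutilT 0 0 = h *: zT 2.
Proof.
by rewrite nutilT_coord sum_ord4 /hlowT /= !mul0r !add0r addr0 mul_cst.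
Qed.

Lemma nutilT1 : nutilT 0 1 = (- h) *: zT 3.
Proof.
by rewrite nutilT_coord sum_ord4 /hlowT /= !mul0r !add0r mulNr mul_cst scaleNr.
Qed.

Lemma nutilT2 : nutilT 0 2 = h *: zT 0.
Proof. by rewrite nutilT_coord sum_ord4 /hlowT /= !mul0r !addr0 mul_cst. Qed.

Lemma nutilT3 : nutilT 0 3 = (- h) *: zT 1.
Proof.
rewrite nutilT_coord sum_ord4 /hlowT /= !mul0r add0r !addr0 mulNr mul_cst.
by rewrite scaleNr.
Qed.

Lemma nutilT_central b : ZBT (b *: nutilT - ractT nutilT b).
Proof.
have central (i k : 'I_4) c : nat_of_ord k = ((i + 2) %% 4)%N ->
    IAT (b * (c *: zT k) - (c *: zT k) * twT i b).
  move=> ik; rewrite scalerAr -scalerAl -scalerBr; apply: igT_scale.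
  by rewrite -{1}(@twT_antipodal i k b ik); apply: IAT_comm_twT.
apply: bgT_mem; left => i; rewrite !mxE.
elim/ord4_ind: i; [rewrite nutilT0 | rewrite nutilT1 | rewrite nutilT2 |
  rewrite nutilT3]; exact: central.
Qed.

Lemma nu_dot_z_quad : \sum_(j < 4) nutilT 0 j * zT j = quad h (- h) h (- h) 0.
Proof.
rewrite sum_ord4 nutilT0 nutilT1 nutilT2 nutilT3 -!scalerAl.
rewrite -/z02 -/z13 -/z20 -/z31 z02_quad z13_quad z20_quad z31_quad !quadD.
by congr quad; rewrite ?add0r ?addr0.
Qed.

Lemma IC13T_nu_dot_z : IC13T (\sum_(j < 4) nutilT 0 j * zT j).
Proof.
have -> : \sum_(j < 4) nutilT 0 j * zT j = cst 2 * ftilT.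
  rewrite nu_dot_z_quad ftilT_quad mul_cst quadZ.
  by congr quad; rewrite ?mulr0 //; field.
by apply: igT_mull; apply: IC13T_ftilT.
Qed.

Definition zsgn (i : 'I_4) : T := (-1) ^+ i * zT i.

(* In C, phi(omega) = g_B^{-1}(omega (x) nu~); cf. IC13T_gnu. *)
Definition phi (v : 'rV[T]_4) : T := \sum_(i < 4) v 0 i * zsgn i.

Lemma phiD v w : phi (v + w) = phi v + phi w.
Proof. by rewrite /phi -big_split; apply: eq_bigr => i _; rewrite mxE mulrDl. Qed.

Lemma phiZ a v : phi (a *: v) = a * phi v.
Proof. by rewrite /phi mulr_sumr; apply: eq_bigr => i _; rewrite mxE mulrA. Qed.

Lemma phi0 : phi 0 = 0.
Proof. by rewrite /phi big1 // => i _; rewrite mxE mul0r. Qed.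

Lemma phi_dz i : phi (dzT i) = zsgn i.
Proof.
rewrite /phi (bigD1 i) //= dzT_coord eqxx mul1r big1 ?addr0 // => j ne.
by rewrite dzT_coord eq_sym (negbTE ne) mul0r.
Qed.

Lemma phi_ractT v b : IAT (phi (ractT v b) - phi v * b).
Proof.
rewrite /phi mulr_suml -sumrB; apply: igT_sum => i _.
rewrite mxE -!mulrA -mulrBr; apply: igT_mull.
rewrite /zsgn [twT i b * _]mulrA (commr_sign (twT i b) i) -mulrA -mulrBr.
by apply: igT_mull; apply: IAT_comm_twT.
Qed.

Lemma phi_bimod_genT (S : 'rV[T]_4 -> Prop) :
  (forall s, S s -> IC13T (phi s)) ->
  forall v, bimod_genT S v -> IC13T (phi v).
Proof.
move=> phiS v; elim=> [a s b Ss||x y _ Hx _ Hy];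
  last by rewrite phiD; apply: igT_add.
  apply: (igT_subK (IAT_IC13T (phi_ractT (a *: s) b))).
  by rewrite phiZ; apply: igT_mulr; apply: igT_mull; apply: phiS.
by rewrite phi0; apply: igT_0.
Qed.

Lemma zsgn0 : zsgn 0 = zT 0. Proof. by rewrite /zsgn expr0 mul1r. Qed.
Lemma zsgn1 : zsgn 1 = - zT 1. Proof. by rewrite /zsgn expr1 mulN1r. Qed.
Lemma zsgn2 : zsgn 2 = zT 2. Proof. by rewrite /zsgn sqrrN expr1n mul1r. Qed.
Lemma zsgn3 : zsgn 3 = - zT 3.
Proof. by rewrite /zsgn exprS sqrrN expr1n mulr1 mulN1r. Qed.

Lemma phi_dT_fAT : phi (dT fAT) = \sum_(j < 4) nutilT 0 j * zT j.
Proof.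
have phi02 : phi (dT z02) = z20 + z02.
  by rewrite /z02 dT_zz phiD !phiZ !phi_dz zsgn0 zsgn2 scale1r.
have phi13 : phi (dT z13) = - z31 - z13.
  by rewrite /z13 dT_zz phiD !phiZ !phi_dz zsgn1 zsgn3 scale1r !mulrN.
rewrite fAT_quad dT_quad !phiD !phiZ cst0 !mul0r !addr0 phi02 phi13.
rewrite nu_dot_z_quad !mul_cst.
rewrite -[z02]scale1r -[z13]scale1r -[z20]scale1r -[z31]scale1r.
rewrite z02_quad z13_quad z20_quad z31_quad !quadN !quadD !quadZ !quadD.
by congr quad; ring.
Qed.

Lemma phi_ZBT v : ZBT v -> IC13T (phi v).
Proof.
apply: phi_bimod_genT => s [Av | [[w ->] | [[w ->] | ->]]].
- by apply: igT_sum => i _; apply: igT_mulr; apply: IAT_IC13T; apply: Av.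
- by rewrite phiZ; apply: igT_mulr; apply: IC13T_fAT.
- apply: (igT_subK (IAT_IC13T (phi_ractT w fAT))).
  by apply: igT_mull; apply: IC13T_fAT.
by rewrite phi_dT_fAT; apply: IC13T_nu_dot_z.
Qed.

Lemma phi_ZQT v : ZQC v -> IC13T (phi v).
Proof.
apply: phi_bimod_genT => s [/phi_ZBT // | [a [w [Ca [-> | ->]]]]].
  by rewrite phiZ; apply: igT_mulr.
by apply: (igT_subK (IAT_IC13T (phi_ractT w a))); apply: igT_mull.
Qed.

Lemma phi_nutilT_1 : IC13T (phi nutilT - 1).
Proof.
have phi_nu : phi nutilT = quad h h h h 0.
  rewrite /phi sum_ord4 nutilT0 nutilT1 nutilT2 nutilT3 zsgn0 zsgn1 zsgn2 zsgn3.
  rewrite !mulrN -!scalerAl -/z02 -/z13 -/z20 -/z31 -!scaleNr.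
  by rewrite z02_quad z13_quad z20_quad z31_quad !quadD; congr quad; ring.
have -> : phi nutilT - 1 = cst 2 * fAT + quad (- h) (- h) h h 0.
  have one_quad : 1 = quad 0 0 0 0 1 by rewrite /quad !scale0r !add0r scale1r.
  rewrite phi_nu [X in _ - X]one_quad quadB fAT_quad mul_cst quadZ quadD.
  by congr quad; field.
apply: igT_add; first by apply: igT_mull; apply: IC13T_fAT.
by apply: IAT_IC13T; apply: IAT_quad; rewrite addNr.
Qed.

Definition gnu (i : 'I_4) : T :=
  \sum_(j < 4) twT i (nutilT 0 j) * (gupT i j - zT i * zT j).

Lemma ginvBT_nutilT om : ginvBT om nutilT = \sum_(i < 4) om 0 i * gnu i.
Proof.
apply: eq_bigr => i _; rewrite /gnu mulr_sumr.
by apply: eq_bigr => j _; rewrite mulrA.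
Qed.

Lemma ginvBT_dz_nutilT j : ginvBT (dzT j) nutilT = gnu j.
Proof.
rewrite ginvBT_nutilT (bigD1 j) //= dzT_coord eqxx mul1r big1 ?addr0 // => i ne.
by rewrite dzT_coord eq_sym (negbTE ne) mul0r.
Qed.

Lemma gnu_gupT i : \sum_(j < 4) twT i (nutilT 0 j) * gupT i j = zsgn i.
Proof.
have two_half : (2 : CC)^-1 *+ 2 = 1 by rewrite mulr2n; field.
elim/ord4_ind: i; rewrite sum_ord4 /gupT /= ?mulr0 ?add0r ?addr0.
- rewrite nutilT2 twTZ twT_z scale1r mulr_natr scalerMnl two_half.
  by rewrite scale1r zsgn0.
- rewrite nutilT3 twTZ twT_z scale1r mulr_natr scalerMnl mulNrn two_half.
  by rewrite scaleN1r zsgn1.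
- rewrite nutilT0 twTZ twT_z scale1r mulr_natr scalerMnl two_half.
  by rewrite scale1r zsgn2.
rewrite nutilT1 twTZ twT_z scale1r mulr_natr scalerMnl mulNrn two_half.
by rewrite scaleN1r zsgn3.
Qed.

Lemma IC13T_gnu_zz i : IC13T (\sum_(j < 4) twT i (nutilT 0 j) * (zT i * zT j)).
Proof.
have -> : \sum_(j < 4) twT i (nutilT 0 j) * (zT i * zT j) =
    \sum_(j < 4) (twT i (nutilT 0 j) * zT i - zT i * nutilT 0 j) * zT j
    + zT i * \sum_(j < 4) nutilT 0 j * zT j.
  rewrite mulr_sumr -big_split /=; apply: eq_bigr => j _.
  by rewrite mulrBl !mulrA subrK.
apply: igT_add; last by apply: igT_mull; apply: IC13T_nu_dot_z.
by apply: igT_sum => j _; apply: igT_mulr; apply: IAT_IC13T; apply: IAT_comm_twT.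
Qed.

Lemma IC13T_gnu i : IC13T (gnu i - zsgn i).
Proof.
have -> : gnu i - zsgn i = - \sum_(j < 4) twT i (nutilT 0 j) * (zT i * zT j).
  rewrite /gnu (eq_bigr _ (fun j _ => mulrBr _ _ _)) sumrB gnu_gupT.
  by rewrite addrC addKr.
by apply: igT_opp; apply: IC13T_gnu_zz.
Qed.

Lemma ginvBT_nutilT_1 : IC13T (ginvBT nutilT nutilT - 1).
Proof.
have -> : ginvBT nutilT nutilT - 1 =
    \sum_(i < 4) nutilT 0 i * (gnu i - zsgn i) + (phi nutilT - 1).
  rewrite ginvBT_nutilT /phi addrA -big_split /=; congr (_ - _).
  by apply: eq_bigr => i _; rewrite mulrBr subrK.
apply: igT_add; last exact: phi_nutilT_1.
by apply: igT_sum => i _; apply: igT_mull; apply: IC13T_gnu.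
Qed.

Lemma nutilT_free c : ZQC (c *: nutilT) -> IC13T c.
Proof.
move=> /phi_ZQT; rewrite phiZ => Cc.
apply: (igT_subK _ Cc).
rewrite -{1}[c]mulr1 -mulrBr -opprB mulrN.
by apply: igT_opp; apply: igT_mull; apply: phi_nutilT_1.
Qed.

Lemma PitilT_dz j :
  ZQC (PitilT (dzT j) - (dzT j + ((-1) ^+ j.+1 * zT j) *: nutilT)).
Proof.
rewrite /PitilT ginvBT_dz_nutilT exprS mulN1r mulNr -/(zsgn j).
have -> : dzT j - gnu j *: nutilT - (dzT j + (- zsgn j) *: nutilT) =
    (- (gnu j - zsgn j)) *: nutilT.
  by rewrite opprD addrACA subrr add0r !scaleNr scalerBl opprB opprK addrC.
apply: bgT_mem; right; exists (- (gnu j - zsgn j)), nutilT; split; last by left.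
by apply: igT_opp; apply: IC13T_gnu.
Qed.

Lemma ZQT_ractT_nutilT b : ZQC (ractT nutilT b - b *: nutilT).
Proof.
by apply: bgT_mem; left; rewrite -opprB; apply: bgT_opp; apply: nutilT_central.
Qed.

Lemma ZQT_act_nutilT a b c s : ZQC (s - c *: nutilT) ->
  ZQC (ractT (a *: s) b - (a * c * b) *: nutilT).
Proof.
move=> Zs.
have -> : ractT (a *: s) b - (a * c * b) *: nutilT =
    ractT (a *: (s - c *: nutilT)) b + (a * c) *: (ractT nutilT b - b *: nutilT).
  rewrite scalerBr ractTBl scalerBr !scalerA [ractT ((a * c) *: _) b]ractTZl.
  by rewrite addrA subrK.
by apply: bgT_add; [apply: bgT_act | apply: bgT_scale; apply: ZQT_ractT_nutilT].
Qed.

Lemma dT_triple u s v :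
  dT (u * s * v) = ractT (dT u) (s * v) + u *: ractT (dT s) v + (u * s) *: dT v.
Proof. by rewrite dTM dTM ractTDl ractTA ractTZl. Qed.

Lemma dT_IC13T x : IC13T x -> exists c, ZQC (dT x - c *: nutilT).
Proof.
elim=> [u s v Cs||x1 x2 _ [c1 H1] _ [c2 H2]]; first last.
- exists (c1 + c2); rewrite dTD scalerDl opprD addrACA; exact: bgT_add.
- by exists 0; rewrite dT0 scale0r subr0; apply: bgT_0.
have Zl : ZQC (ractT (dT u) (s * v)).
  apply: bgT_mem; right; exists (s * v), (dT u); split; last by right.
  by apply: igT_mulr; apply: igT_mem.
have Zr : ZQC ((u * s) *: dT v).
  apply: bgT_mem; right; exists (u * s), (dT v); split; last by left.
  by apply: igT_mull; apply: igT_mem.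
rewrite dT_triple; move: Zl Zr.
case: Cs => [[i [j ->]] | [-> | ->]] Zl Zr.
- exists 0; rewrite dT_rel ractT0l scaler0 addr0 scale0r subr0.
  exact: bgT_add.
- exists 0; rewrite scale0r subr0; apply: bgT_add => //; apply: bgT_add => //.
  by rewrite -ractTZl; apply: bgT_gen; left; apply: bgT_mem; do 3!right.
exists (u * v).
have -> : ractT (dT u) (ftilT * v) + u *: ractT nutilT v + (u * ftilT) *: dT v
    - (u * v) *: nutilT
  = ractT (dT u) (ftilT * v) + (u * ftilT) *: dT v
    + u *: (ractT nutilT v - v *: nutilT).
  by rewrite scalerBr scalerA [in RHS]addrA (addrAC (ractT (dT u) (ftilT * v))).
by apply: bgT_add; [apply: bgT_add | apply: bgT_scale; apply: ZQT_ractT_nutilT].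
Qed.

Lemma NClT_nutilT v : NClT IC13T v -> exists c, ZQC (v - c *: nutilT).
Proof.
elim=> [a s b Ns||x y _ [c1 H1] _ [c2 H2]].
- have [c Zs] : exists c, ZQC (s - c *: nutilT).
    case: Ns => [Zs | [x [Cx ->]]]; last exact: dT_IC13T.
    by exists 0; rewrite scale0r subr0.
  by exists (a * c * b); apply: ZQT_act_nutilT.
- by exists 0; rewrite scale0r subr0; apply: bgT_0.
exists (c1 + c2); rewrite scalerDl opprD addrACA; exact: bgT_add.
Qed.

Lemma nc_hypersurfaceT_nutilT : nc_hypersurfaceT IC13T nutilT.
Proof.
split.
- exact: nutilT_central.
- exact: ginvBT_nutilT_1.
- by apply: bgT_mem; right; exists ftilT; split => //; apply: IC13T_ftilT.
- exact: NClT_nutilT.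
exact: nutilT_free.
Qed.

Theorem proposition4p13T :
  IAT (ftilT - halfT * (zT 0 * zT 2 - zT 1 * zT 3)) /\
  (forall b, IBT (b * ftilT - ftilT * b)) /\
  ZBT (nutilT - \sum_(i < 4) \sum_(j < 4) (hlowT i j * zT i) *: dzT j) /\
  nc_hypersurfaceT IC13T nutilT /\
  (forall j : 'I_4,
     ZQC (PitilT (dzT j) - (dzT j + ((-1) ^+ j.+1 * zT j) *: nutilT))).
Proof.
split; first exact: ftilT_IAT.
split; first exact: ftilT_central.
split; first by rewrite -nutilTE subrr; apply: bgT_0.
split; [exact: nc_hypersurfaceT_nutilT | exact: PitilT_dz].
Qed.

End TwistedAlgebra.

Section FreeAlgebra.
Context {R : realType} {theta : R}.
Local Notation CC := (CC R).
Local Notation Fr := (Fr R).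
Local Notation Om := (Om R).
Local Notation cstF := (fun c : CC => c%:MP : Fr).

Lemma mulr_malgC (x : Fr) (c : CC) : x * c%:MP = c *: x.
Proof.
rewrite (malgMEw (fsubset_refl _) (msuppC_le c)) malgZ_def /fgscale.
by apply: eq_bigr => k _; rewrite big_seq_fset1 mcoeffC eqxx mulr1n mulm1 mulrC.
Qed.

Lemma malg_scalerAr (c : CC) (x y : Fr) : x * (c *: y) = c *: (x * y).
Proof. by rewrite -mul_malgC mulrA mulr_malgC scalerAl. Qed.

Lemma malgC_alg (c : CC) : c%:MP = c%:A :> Fr.
Proof. by rewrite -mul_malgC mulr1. Qed.

Lemma malgU_scale (c : CC) (w : fmonom 'I_4) : << c *g w >> = c *: (<< w >> : Fr).
Proof. by apply/malgP => k; rewrite mcoeffZ !mcoeffU mulrnAr mulr1. Qed.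

Lemma zwE (s : seq 'I_4) : zw R s = << FMonom s >>.
Proof.
elim: s => [|j s IHs]; first by rewrite /zw big_nil -fmoneE -mpolyC1E.
rewrite /zw big_cons -/(zw R s) IHs /z malgM_def fgmulUU mulr1.
by congr << _ >>; rewrite fmuE; apply: val_inj; rewrite /= fmM.
Qed.

Lemma malg_word_ind (P : Fr -> Prop) : P 0 ->
  (forall x y, P x -> P y -> P (x + y)) -> (forall c s, P (c *: zw R s)) ->
  forall x, P x.
Proof.
move=> P0 PD PW x; rewrite (monalgE x); apply: big_ind => // [[s]] _.
by rewrite malgU_scale -zwE.
Qed.

Lemma tw_mmap i b :
  tw theta i b
  = mmap cstF (fun w : {fmonom 'I_4} => chi theta i w *: (<< w >> : Fr)) b.
Proof.
by rewrite /tw mmapE; apply: eq_bigr => w _; rewrite mul_malgC scalerA.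
Qed.

Lemma twD i : {morph tw theta i : x y / x + y}.
Proof. by move=> x y; rewrite !tw_mmap mmapD. Qed.

Lemma tw_word i c s : tw theta i (c *: zw R s) = (c * chi theta i s) *: zw R s.
Proof. by rewrite tw_mmap zwE -malgU_scale mmapU mul_malgC scalerA. Qed.

Lemma dd_coord b j :
  dd theta b 0 j = mmap cstF (fun w : {fmonom 'I_4} => dword theta w 0 j) b.
Proof. by rewrite /dd summxE mmapE; apply: eq_bigr => w _; rewrite mxE. Qed.

Lemma ddD : {morph dd theta : x y / x + y}.
Proof.
move=> x y; apply/rowP => j; rewrite [in RHS]mxE [in LHS]dd_coord [in LHS]mmapD.
by rewrite -!dd_coord.
Qed.

Lemma dd_word c s : dd theta (c *: zw R s) = c%:MP *: dword theta s.
Proof.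
apply/rowP => j; rewrite [in RHS]mxE [in LHS]dd_coord [in LHS]zwE.
by rewrite -[in LHS]malgU_scale [in LHS]mmapU.
Qed.

Lemma ideal_genP (S S' : Fr -> Prop) : (forall x, S x <-> S' x) ->
  forall x, ideal_gen S x <-> @ideal_genT _ _ S' x.
Proof.
move=> SS' x; split.
- elim=> [u s v /SS' Ss||x1 x2 _ H1 _ H2];
    [exact: igT_gen | exact: igT_0 | exact: igT_add].
- elim=> [u s v /SS' Ss||x1 x2 _ H1 _ H2];
    [exact: ig_gen | exact: ig_0 | exact: ig_add].
Qed.

Lemma bimod_genP (S S' : Om -> Prop) : (forall v, S v <-> S' v) ->
  forall v, bimod_gen theta S v <-> @bimod_genT _ _ (tw theta) S' v.
Proof.
move=> SS' v; split.
- elim=> [a s b /SS' Ss||x y _ Hx _ Hy];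
    [exact: bgT_gen | exact: bgT_0 | exact: bgT_add].
- elim=> [a s b /SS' Ss||x y _ Hx _ Hy];
    [exact: bg_gen | exact: bg_0 | exact: bg_add].
Qed.

Lemma IA_iff x : IA theta x <-> @IAT _ theta _ cstF (z R) x.
Proof. exact: ideal_genP. Qed.

Lemma IB_iff x : IB theta x <-> @IBT _ theta _ cstF (z R) x.
Proof. exact: ideal_genP. Qed.

Lemma IC13_iff x : IC13 theta x <-> @IC13T _ theta _ cstF (z R) x.
Proof. exact: ideal_genP. Qed.

Lemma ZB_iff v : ZB theta v <-> @ZBT _ theta _ cstF (z R) (tw theta) (dd theta) v.
Proof.
apply: bimod_genP => w; split=> [[Aw|]|[Aw|]]; try by right.
- by left => i; apply/IA_iff.
- by left => i; apply/IA_iff.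
Qed.

Section QuotientIdeal.
Context {IC IC' : Fr -> Prop}.
Hypothesis ICP : forall x, IC x <-> IC' x.

Lemma ZQ_iff v :
  ZQ theta IC v <-> @ZQT _ theta _ cstF (z R) (tw theta) (dd theta) IC' v.
Proof.
apply: bimod_genP => w;
  split=> [[/ZB_iff|[a [w' [/ICP]]]]|[/ZB_iff|[a [w' [/ICP]]]]];
  by [left | right; exists a, w'].
Qed.

Lemma NCl_iff v :
  NCl theta IC v <-> @NClT _ theta _ cstF (z R) (tw theta) (dd theta) IC' v.
Proof.
apply: bimod_genP => w; split=> [[/ZQ_iff|[a [/ICP]]]|[/ZQ_iff|[a [/ICP]]]];
  by [left | right; exists a].
Qed.

Lemma nc_hypersurfaceT_Fr nu :
  @nc_hypersurfaceT _ theta _ cstF (z R) (tw theta) (dd theta) IC' nu ->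
  nc_hypersurface theta IC nu.
Proof.
case=> central ginv1 Nnu span free; split.
- by move=> b; apply/ZB_iff.
- exact/ICP.
- exact/NCl_iff.
- by move=> v /NCl_iff /span [c Zc]; exists c; apply/ZQ_iff.
- by move=> c /ZQ_iff /free /ICP.
Qed.

End QuotientIdeal.

End FreeAlgebra.

Theorem proposition4p13 (R : realType) (theta : R) :
  (* f~ = 1/2 sum h_ij z^i z^j = 1/2 (z^1 z^3 - z^2 z^4) in A (hence in B) *)
  IA theta (ftil R - halfF R * (z R 0 * z R 2 - z R 1 * z R 3)) /\
  (* f~ is central in B *)
  (forall b : Fr R, IB theta (b * ftil R - ftil R * b)) /\
  (* nu~ = d_B f~ = sum_{ij} h_ij z^i dz^j in Omega^1_B *)
  ZB theta (nutil theta
            - \sum_(i < 4) \sum_(j < 4) (hlow R i j * z R i) *: dz R j) /\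
  (* nu~ is central, g^{-1}(nu~ (x) nu~) = 1 in C, and C is a
     noncommutative hypersurface of B with basis [nu~] of N^1_C *)
  nc_hypersurface theta (IC13 theta) (nutil theta) /\
  (* Pi~(dz^i) = dz^i + (-1)^i z^i nu~ in q_!(Omega^1_B) (paper index i = j+1) *)
  (forall j : 'I_4,
     ZQ theta (IC13 theta)
       (Pitil theta (dz R j)
        - (dz R j + ((-1) ^+ j.+1 * z R j) *: nutil theta))).
Proof.
have [ftilE [central [nuE [hyp Pi]]]] :=
  @proposition4p13T R theta (Fr R) (@malg_scalerAr R) (fun c => c%:MP)
    (@malgC_alg R) (z R)
    (@malg_word_ind R) (tw theta) (@twD R theta) (@tw_word R theta)
    (dd theta) (@ddD R theta) (@dd_word R theta).
have IC13P := @IC13_iff R theta.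
split; first exact/IA_iff.
split; first by move=> b; apply/IB_iff; apply: central.
split; first by apply/ZB_iff; apply: nuE.
split; first exact: nc_hypersurfaceT_Fr IC13P _ hyp.
by move=> j; apply/(ZQ_iff IC13P); apply: Pi.
Qed.
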